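(* Let $D=N_1\ltimes\dots\ltimes N_n$ be the dynamics of an $\mathrm{RNC}_+$ with input domain $U$, let $D'=\langle U,X',f\rangle$ be subdynamics of $D$, let $\lambda_\Sigma:U\to\Sigma$ be a symbol grounding and $u_e\in U$. For every $i\in[n]$ and every $\vec x,\vec y\in X'_{[i]}$, if $\bar\rho_i(\vec x)=\bar\rho_i(\vec y)$ then $\vec x\sim\vec y$.
   Context: Neuron $N_i$ has state update $f_i(x_i,\langle u,x_1,\dots,x_{i-1}\rangle)=\tanh(w_i x_i+\beta_i(u,x_1,\dots,x_{i-1}))$ with $w_i>0$ and $\beta_i$ a feedforward network; $\bar f_i(\langle x_1,\dots,x_i\rangle,u)=\langle f_1(x_1,u_1),\dots,f_i(x_i,u_i)\rangle$ with $u_j=\langle u,x_1,\dots,x_{j-1}\rangle$. $X'\subseteq X_1\times\dots\times X_n$ satisfies $f(X'\times U)\subseteq X'$, and $X'_{[i]}=\{\langle z_1,\dots,z_i\rangle:\exists z_{i+1},\dots,z_n,\ \langle z_1,\dots,z_n\rangle\in X'\}$. For $\vec x=\langle x_1,\dots,x_i\rangle$, define $x_{j,0}=x_j$, $x_{j,t}=f_j(x_{j,t-1},\langle u_e,x_{1,t-1},\dots,x_{j-1,t-1}\rangle)$, let $\mathcal{S}^*_j(u_e,x_1,\dots,x_j)=\lim_t x_{j,t}$ (this limit exists) and $\bar{\mathcal{S}}^*_i(u_e,\vec x)=\langle\mathcal S^*_1(u_e,x_1),\dots,\mathcal S^*_i(u_e,x_1,\dots,x_i)\rangle$. On $X'_{[i]}$: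 $\sim_e$ is the smallest equivalence relation with $\vec x\sim_e\vec y$ whenever $\bar{\mathcal S}^*_i(u_e,\vec x)=\bar{\mathcal S}^*_i(u_e,\vec y)$; $\sim$ is the smallest equivalence relation containing $\sim_e$ and such that $\vec x\sim\vec y$ implies $\bar f_i(\vec x,u)\sim\bar f_i(\vec y,v)$ for all $u,v\in U$ with $\lambda_\Sigma(u)=\lambda_\Sigma(v)$; $[\vec x]$ denotes the $\sim$-class. Pivots: for neuron $j$ with $w_j>1$, let $p_-^{(j)},p_+^{(j)}$ be the pivots $p_-=p_-^{v_-}$, $p_+=p_+^{v_+}$ of $g_v(x)=x-\tanh(w_jx+v)$, where $p_-^v<p_+^v$ are the local maximum/minimum points of $g_v$ and $v_-$ (resp. $v_+$) is the unique $v$ with $g_v(p_-^v)=0$ (resp. $g_v(p_+^v)=0$). Let $\kappa_j(x)=1$ if $x\le p_-^{(j)}$, $2$ if $p_-^{(j)}<x<p_+^{(j)}$, $3$ if $p_+^{(j)}\le x$ (when $w_j\le1$, $\kappa_j$ is an arbitrary map into $\{1,2,3\}$). Set $\eta_j(x_1,\dots,x_j)=\kappa_j(\mathcal S^*_j(u_e,x_1,\dots,x_j))$, $\bar\eta_i(\vec x)=\langle\eta_1(x_1),\dots,\eta_i(x_1,\dots,x_i)\rangle\in\{1,2,3\}^i$, and $\bar\rho_i(\vec x)=\min\bar\eta_i([\vec x])$, the minimum in the lexicographic order on $\{1,2,3\}^i$. *)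

From Stdlib Require Import Reals List ClassicalEpsilon.
From Coquelicot Require Import Coquelicot.
Import ListNotations.
Open Scope R_scope.

Definition tanh (x : R) : R := (exp x - exp (- x)) / (exp x + exp (- x)).

Fixpoint dot (a b : list R) : R :=
  match a, b with
  | x :: a', y :: b' => x * y + dot a' b'
  | _, _ => 0
  end.

(* A layer: weight matrix (rows), bias vector, activation function. *)
Definition layer := (list (list R) * list R * (R -> R))%type.

Definition eval_layer (l : layer) (v : list R) : list R :=
  let '(W, b, sigma) := l in
  map (fun rb => sigma (dot (fst rb) v + snd rb)) (combine W b).

Definition eval_ffn (ls : list layer) (c : list R) (c0 : R) (v : list R) : R :=
  dot c (fold_left (fun acc l => eval_layer l acc) ls v) + c0.

Definition is_ffn (g : list R -> R) : Prop :=
  exists (ls : list layer) (c : list R) (c0 : R),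
    List.Forall (fun l : layer => forall x : R, continuity_pt (snd l) x) ls /\
    forall v, g v = eval_ffn ls c c0 v.

(* ---------- Cascade dynamics on state prefixes (lists) ----------
   Neurons are 0-indexed: neuron j (paper's N_{j+1}) has weight w j and
   bias network beta j, fed with  u ++ [x_1; ...; x_j]. *)
Definition fbar (w : nat -> R) (beta : nat -> list R -> R)
  (x u : list R) : list R :=
  map (fun j => tanh (w j * nth j x 0 + beta j (u ++ firstn j x)))
      (seq 0 (length x)).

(* S*_j(u_e, x_1, ..., x_{j+1}) for 0-indexed neuron j. *)
Definition Sstar (w : nat -> R) (beta : nat -> list R -> R) (ue : list R)
  (j : nat) (x : list R) : R :=
  real (Lim_seq (fun t =>
    nth j (Nat.iter t (fun s => fbar w beta s ue) (firstn (S j) x)) 0)).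

Definition Sbar w beta ue (x : list R) : list R :=
  map (fun j => Sstar w beta ue j x) (seq 0 (length x)).

Definition Xpre (X' : list R -> Prop) (i : nat) (y : list R) : Prop :=
  exists z, X' z /\ y = firstn i z.

Inductive eqclos (D : list R -> Prop) (r : list R -> list R -> Prop)
  : list R -> list R -> Prop :=
| eqc_base x y : D x -> D y -> r x y -> eqclos D r x y
| eqc_refl x : D x -> eqclos D r x x
| eqc_sym x y : eqclos D r x y -> eqclos D r y x
| eqc_trans x y z : eqclos D r x y -> eqclos D r y z -> eqclos D r x z.

Definition sim_e w beta ue X' i : list R -> list R -> Prop :=
  eqclos (Xpre X' i) (fun x y => Sbar w beta ue x = Sbar w beta ue y).

Inductive sim (w : nat -> R) (beta : nat -> list R -> R) (ue : list R)
  (X' : list R -> Prop) (U : list R -> Prop) {Sigma : Type}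
  (lam : list R -> Sigma) (i : nat) : list R -> list R -> Prop :=
| sim_base x y : sim_e w beta ue X' i x y -> sim w beta ue X' U lam i x y
| sim_refl x : Xpre X' i x -> sim w beta ue X' U lam i x x
| sim_sym x y : sim w beta ue X' U lam i x y -> sim w beta ue X' U lam i y x
| sim_trans x y z : sim w beta ue X' U lam i x y ->
    sim w beta ue X' U lam i y z -> sim w beta ue X' U lam i x z
| sim_step x y u v : sim w beta ue X' U lam i x y -> U u -> U v ->
    lam u = lam v ->
    sim w beta ue X' U lam i (fbar w beta x u) (fbar w beta y v).

Definition gv (w v x : R) : R := x - tanh (w * x + v).

Definition loc_max (f : R -> R) (p : R) : Prop :=
  exists eps, 0 < eps /\ forall y, Rabs (y - p) < eps -> f y <= f p.
Definition loc_min (f : R -> R) (p : R) : Prop :=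
  exists eps, 0 < eps /\ forall y, Rabs (y - p) < eps -> f p <= f y.

Definition pm_v (w v : R) : R := epsilon (inhabits 0) (loc_max (gv w v)).
Definition pp_v (w v : R) : R := epsilon (inhabits 0) (loc_min (gv w v)).
Definition v_minus (w : R) : R :=
  epsilon (inhabits 0) (fun v => gv w v (pm_v w v) = 0).
Definition v_plus (w : R) : R :=
  epsilon (inhabits 0) (fun v => gv w v (pp_v w v) = 0).
Definition pivot_minus (w : R) : R := pm_v w (v_minus w).
Definition pivot_plus (w : R) : R := pp_v w (v_plus w).

(* kappa for a neuron with weight wj > 1 *)
Definition kappa_pivot (wj x : R) : nat :=
  if Rle_dec x (pivot_minus wj) then 1%nat
  else if Rlt_dec x (pivot_plus wj) then 2%nat else 3%nat.

Definition etabar w beta ue (kappa : nat -> R -> nat) (x : list R) : list nat :=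
  map (fun j => kappa j (Sstar w beta ue j x)) (seq 0 (length x)).

Fixpoint lex_le (a b : list nat) : Prop :=
  match a, b with
  | [], _ => True
  | _ :: _, [] => False
  | x :: a', y :: b' => (x < y)%nat \/ (x = y /\ lex_le a' b')
  end.

Definition rho w beta ue X' U {Sigma : Type} (lam : list R -> Sigma)
  (kappa : nat -> R -> nat) (i : nat) (x : list R) : list nat :=
  epsilon (inhabits []) (fun s =>
    (exists y, sim w beta ue X' U lam i x y /\ etabar w beta ue kappa y = s) /\
    forall y, sim w beta ue X' U lam i x y ->
      lex_le s (etabar w beta ue kappa y)).

(* Once the earlier neurons have converged, neuron j iterates
   x |-> tanh (w x + b_t) with biases b_t -> b.  Such an orbit converges: a level
   strictly between its liminf and limsup that is not a fixed point of
   x |-> tanh (w x + b) can be crossed in one direction only once the bias has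
   settled, so otherwise a whole interval would consist of fixed points.  For
   w <= 1 there is at most one fixed point, as tanh shrinks distances; for
   w > 1, between two fixed points the slope w (1 - tanh^2) equals 1, i.e. the
   value lies at one of the levels +-sqrt (1 - 1/w), so there are at most three
   fixed points.  These levels are exactly the pivots, hence
   kappa_j separates fixed points, and states with the same eta-bar have the
   same S*-bar, i.e. are ~_e.  As rho_i is attained in every ~-class,
   x ~ x' ~_e y' ~ y. *)

From Pilot Require Import Defs.
From Stdlib Require Import Reals Lra Lia Psatz List Classical ClassicalEpsilon Wf_nat.
From Coquelicot Require Import Coquelicot.
Open Scope R_scope.

(* [Reals] exports its own [tanh], which would shadow the one of [Defs]. *)
Notation tanh := Defs.tanh.

Lemma exp_add_exp_opp_pos x : 0 < exp x + exp (- x).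
Proof. pose proof (exp_pos x); pose proof (exp_pos (- x)); lra. Qed.

Lemma tanh_bound x : -1 < tanh x < 1.
Proof.
  unfold Defs.tanh. pose proof (exp_pos x); pose proof (exp_pos (- x)).
  split; [apply Rlt_div_r | apply Rlt_div_l]; lra.
Qed.

Lemma tanh_opp x : tanh (- x) = - tanh x.
Proof.
  unfold Defs.tanh. rewrite Ropp_involutive.
  pose proof (exp_add_exp_opp_pos x). field. lra.
Qed.

Lemma derivable_pt_lim_tanh x : derivable_pt_lim tanh x (1 - tanh x ^ 2).
Proof.
  apply is_derive_Reals. unfold Defs.tanh. pose proof (exp_add_exp_opp_pos x).
  auto_derive; [lra | field; lra].
Qed.

Lemma continuity_pt_tanh x : continuity_pt tanh x.
Proof.
  apply derivable_continuous_pt. exists (1 - tanh x ^ 2). apply derivable_pt_lim_tanh.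
Qed.

Lemma MVT_tanh a c : a < c ->
  exists xi, a < xi < c /\ tanh c - tanh a = (1 - tanh xi ^ 2) * (c - a).
Proof.
  intros Hac.
  destruct (MVT_cor2 tanh (fun x => 1 - tanh x ^ 2) a c Hac) as [xi [E Hxi]].
  - intros; apply derivable_pt_lim_tanh.
  - eauto.
Qed.

Lemma tanh_lt a c : a < c -> tanh a < tanh c.
Proof.
  intros Hac. destruct (MVT_tanh a c Hac) as [xi [_ E]].
  pose proof (tanh_bound xi). assert (0 < 1 - tanh xi ^ 2) by nra. nra.
Qed.

Lemma tanh_le a c : a <= c -> tanh a <= tanh c.
Proof. intros [Hac | ->]; [left; now apply tanh_lt | lra]. Qed.

(* On each half of [a, c] the slope is below 1, and strictly so on one of them
   because tanh vanishes at one point only. *)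
Lemma tanh_sub_lt a c : a < c -> tanh c - tanh a < c - a.
Proof.
  intros Hac. set (m := (a + c) / 2).
  destruct (MVT_tanh a m) as [x1 [H1 E1]]; [unfold m; lra |].
  destruct (MVT_tanh m c) as [x2 [H2 E2]]; [unfold m; lra |].
  pose proof (tanh_lt x1 x2 ltac:(lra)).
  assert (0 < tanh x1 ^ 2 \/ 0 < tanh x2 ^ 2) as [Hx | Hx].
  { destruct (Req_dec (tanh x1) 0); [right | left]; nra. }
  all: assert (0 <= tanh x1 ^ 2) by nra; assert (0 <= tanh x2 ^ 2) by nra;
       unfold m in *; nra.
Qed.

Lemma tanh_sub_abs_le a c : Rabs (tanh a - tanh c) <= Rabs (a - c).
Proof.
  destruct (Rtotal_order a c) as [H | [-> | H]].
  - pose proof (tanh_sub_lt a c H). pose proof (tanh_lt a c H).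
    rewrite !Rabs_left by lra. lra.
  - rewrite !Rminus_diag. lra.
  - pose proof (tanh_sub_lt c a H). pose proof (tanh_lt c a H).
    rewrite !Rabs_right by lra. lra.
Qed.

(** * Fixed points of [x |-> tanh (w x + b)] *)

Definition is_fixed_point (w b x : R) : Prop := tanh (w * x + b) = x.

(* The slope [w (1 - tanh^2)] of [x |-> tanh (w x + b)] equals 1 exactly where
   its value is [+- critical_level w]; these turn out to be the pivots. *)
Definition critical_level (w : R) : R := sqrt (1 - / w).

Lemma critical_level_spec w :
  1 < w -> 0 < critical_level w < 1 /\ critical_level w ^ 2 = 1 - / w.
Proof.
  intros Hw. assert (0 < / w < 1).
  { split; [apply Rinv_0_lt_compat; lra |].
    rewrite <- Rinv_1. apply Rinv_lt_contravar; lra. }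
  assert (Hsq : critical_level w ^ 2 = 1 - / w).
  { unfold critical_level. rewrite pow2_sqrt; lra. }
  pose proof (sqrt_pos (1 - / w)). fold (critical_level w) in *.
  split; [nra | exact Hsq].
Qed.

Lemma fixed_point_unique_of_le1 w b x y : 0 < w <= 1 ->
  is_fixed_point w b x -> is_fixed_point w b y -> x = y.
Proof.
  unfold is_fixed_point. intros Hw.
  assert (Hlt : forall x y, tanh (w * x + b) = x -> tanh (w * y + b) = y -> ~ x < y).
  { intros x' y' Fx Fy Hxy.
    pose proof (tanh_sub_lt (w * x' + b) (w * y' + b) ltac:(nra)). nra. }
  intros Fx Fy. destruct (Rtotal_order x y) as [H | [H | H]]; auto.
  - now destruct (Hlt x y Fx Fy).
  - now destruct (Hlt y x Fy Fx).
Qed.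

Lemma fixed_points_straddle_critical w b x y : 1 < w ->
  is_fixed_point w b x -> is_fixed_point w b y -> x < y ->
  x < - critical_level w < y \/ x < critical_level w < y.
Proof.
  unfold is_fixed_point. intros Hw Fx Fy Hxy.
  destruct (critical_level_spec w Hw) as [Hc Hc2].
  destruct (MVT_tanh (w * x + b) (w * y + b)) as [xi [Hxi E]]; [nra |].
  rewrite Fx, Fy in E.
  pose proof (tanh_lt _ _ (proj1 Hxi)). pose proof (tanh_lt _ _ (proj2 Hxi)).
  rewrite Fx, Fy in *.
  assert (Hslope : (1 - tanh xi ^ 2) * w = 1).
  { apply (Rmult_eq_reg_r (y - x)); nra. }
  assert (tanh xi ^ 2 = critical_level w ^ 2).
  { rewrite Hc2. apply (Rmult_eq_reg_r w); [| lra].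
    rewrite Rmult_minus_distr_r, Rinv_l by lra. lra. }
  destruct (Rle_lt_dec 0 (tanh xi)); [right | left]; nra.
Qed.

Lemma no_interval_of_fixed_points w b a c : 0 < w -> a < c ->
  ~ (forall x, a < x < c -> is_fixed_point w b x).
Proof.
  intros Hw Hac Hfix. set (d := (c - a) / 5).
  assert (Fk : forall k, 1 <= k <= 4 -> is_fixed_point w b (a + k * d)).
  { intros k Hk. apply Hfix. unfold d. nra. }
  destruct (Rle_lt_dec w 1) as [Hw1 | Hw1].
  - pose proof (fixed_point_unique_of_le1 w b _ _ ltac:(lra)
      (Fk 1 ltac:(lra)) (Fk 2 ltac:(lra))). unfold d in *. lra.
  - (* three disjoint gaps, each containing one of the two critical levels *)
    pose proof (proj1 (critical_level_spec w Hw1)).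
    pose proof (fixed_points_straddle_critical w b _ _ Hw1
      (Fk 1 ltac:(lra)) (Fk 2 ltac:(lra)) ltac:(unfold d; lra)).
    pose proof (fixed_points_straddle_critical w b _ _ Hw1
      (Fk 2 ltac:(lra)) (Fk 3 ltac:(lra)) ltac:(unfold d; lra)).
    pose proof (fixed_points_straddle_critical w b _ _ Hw1
      (Fk 3 ltac:(lra)) (Fk 4 ltac:(lra)) ltac:(unfold d; lra)).
    unfold d in *. lra.
Qed.

(** * Convergence of a neuron driven by a converging bias *)

Definition frequently (P : nat -> Prop) : Prop := forall N, exists n, (N <= n)%nat /\ P n.

Lemma invariant_from (P : nat -> Prop) N n :
  (forall t, (N <= t)%nat -> P t -> P (S t)) -> (N <= n)%nat -> P n ->
  forall t, (n <= t)%nat -> P t.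
Proof.
  intros Hstep HNn Hn t Ht. induction Ht as [| t Ht IH]; auto.
  apply Hstep; [lia | exact IH].
Qed.

Section TanhOrbit.
Variables (w b : R) (bs x : nat -> R).
Hypothesis Hw : 0 < w.
Hypothesis Hbs : is_lim_seq bs b.
Hypothesis Hx : forall t, x (S t) = tanh (w * x t + bs t).

Lemma bias_eventually_close (eps : R) : 0 < eps ->
  exists N, forall t, (N <= t)%nat -> Rabs (tanh (w * x t + bs t) - tanh (w * x t + b)) < eps.
Proof.
  intros Heps.
  destruct (proj2 (is_lim_seq_spec bs b) Hbs (mkposreal eps Heps)) as [N HN].
  exists N. intros t Ht. eapply Rle_lt_trans; [apply tanh_sub_abs_le |].
  replace (w * x t + bs t - (w * x t + b)) with (bs t - b) by ring. exact (HN t Ht).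
Qed.

Lemma orbit_stays_above c : c < tanh (w * c + b) ->
  exists N, forall t, (N <= t)%nat -> c <= x t -> c <= x (S t).
Proof.
  intros Hc. destruct (bias_eventually_close (tanh (w * c + b) - c)) as [N HN]; [lra |].
  exists N. intros t Ht Hxt. specialize (HN t Ht). rewrite Hx.
  pose proof (tanh_le (w * c + b) (w * x t + b) ltac:(nra)).
  apply Rabs_def2 in HN. lra.
Qed.

Lemma orbit_stays_below c : tanh (w * c + b) < c ->
  exists N, forall t, (N <= t)%nat -> x t <= c -> x (S t) <= c.
Proof.
  intros Hc. destruct (bias_eventually_close (c - tanh (w * c + b))) as [N HN]; [lra |].
  exists N. intros t Ht Hxt. specialize (HN t Ht). rewrite Hx.
  pose proof (tanh_le (w * x t + b) (w * c + b) ltac:(nra)).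
  apply Rabs_def2 in HN. lra.
Qed.

(* Once the bias has settled, the orbit cannot cross a non-fixed level [c] in
   both directions. *)
Lemma fixed_point_of_oscillation c :
  frequently (fun t => x t < c) -> frequently (fun t => c < x t) ->
  is_fixed_point w b c.
Proof.
  intros Hlo Hhi. unfold is_fixed_point.
  destruct (Rtotal_order (tanh (w * c + b)) c) as [H | [H | H]]; auto; exfalso.
  - destruct (orbit_stays_below c H) as [N HN].
    destruct (Hlo N) as [n [Hn Hxn]].
    pose proof (invariant_from (fun t => x t <= c) N n HN Hn ltac:(lra)) as Hbelow.
    destruct (Hhi n) as [k [Hk Hxk]]. specialize (Hbelow k Hk). lra.
  - destruct (orbit_stays_above c H) as [N HN].
    destruct (Hhi N) as [n [Hn Hxn]].
    pose proof (invariant_from (fun t => c <= x t) N n HN Hn ltac:(lra)) as Habove.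
    destruct (Hlo n) as [k [Hk Hxk]]. specialize (Habove k Hk). lra.
Qed.

Lemma orbit_bounded t : Rabs (x t) <= Rmax 1 (Rabs (x O)).
Proof.
  pose proof (Rmax_l 1 (Rabs (x O))). pose proof (Rmax_r 1 (Rabs (x O))).
  destruct t as [| t]; [lra |].
  rewrite Hx. pose proof (tanh_bound (w * x t + bs t)). apply Rabs_le. lra.
Qed.

Lemma orbit_converges : exists L : R, is_lim_seq x L /\ is_fixed_point w b L.
Proof.
  set (M := Rmax 1 (Rabs (x O))).
  assert (Hbd : forall t, - M <= x t <= M) by (intros t; apply Rabs_le_between, orbit_bounded).
  destruct (ex_LimSup_seq x) as [ls Hls]. destruct (ex_LimInf_seq x) as [li Hli].
  pose proof (is_LimSup_LimInf_seq_le x ls li Hls Hli) as Hle.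
  destruct ls as [ls | |];
    [| destruct (Hls (M + 1) O) as [t [_ Ht]]; specialize (Hbd t); lra
     | destruct (Hls (- M - 1)) as [N HN]; specialize (HN N (le_n _)); specialize (Hbd N); lra].
  destruct li as [li | |];
    [| destruct (Hli (M + 1)) as [N HN]; specialize (HN N (le_n _)); specialize (Hbd N); lra
     | destruct (Hli (- M - 1) O) as [t [_ Ht]]; specialize (Hbd t); lra].
  destruct Hle as [Hlt | Heq]; simpl in *.
  - exfalso. apply (no_interval_of_fixed_points w b li ls Hw Hlt).
    intros c Hc. apply fixed_point_of_oscillation.
    + intros N. destruct (proj1 (Hli (mkposreal (c - li) ltac:(lra))) N) as [n [Hn Hxn]].
      simpl in Hxn. exists n. split; [exact Hn | lra].
    + intros N. destruct (proj1 (Hls (mkposreal (ls - c) ltac:(lra))) N) as [n [Hn Hxn]].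
      simpl in Hxn. exists n. split; [exact Hn | lra].
  - subst li. assert (HL : is_lim_seq x ls) by (apply is_LimSup_LimInf_lim_seq; auto).
    exists ls. split; [exact HL |].
    assert (Hshift : is_lim_seq (fun t => x (S t)) ls) by (apply -> is_lim_seq_incr_1; exact HL).
    assert (Himg : is_lim_seq (fun t => x (S t)) (tanh (w * ls + b))).
    { apply (is_lim_seq_ext (fun t => tanh (w * x t + bs t))); [intros; now rewrite Hx |].
      apply is_lim_seq_continuous; [apply continuity_pt_tanh |].
      apply is_lim_seq_plus'; [apply (is_lim_seq_scal_l x w ls HL) | exact Hbs]. }
    pose proof (is_lim_seq_unique _ _ Hshift) as E1.
    rewrite (is_lim_seq_unique _ _ Himg) in E1. now injection E1.
Qed.

End TanhOrbit.

(** * The pivots *)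

Definition artanh (y : R) : R := ln ((1 + y) / (1 - y)) / 2.

Lemma tanh_artanh y : -1 < y < 1 -> tanh (artanh y) = y.
Proof.
  intros Hy. set (s := (1 + y) / (1 - y)).
  assert (Hs : 0 < s) by (unfold s; apply Rdiv_lt_0_compat; lra).
  assert (E : exp (artanh y) * exp (artanh y) = s).
  { rewrite <- exp_plus. replace (artanh y + artanh y) with (ln s)
      by (unfold artanh, s; field). apply exp_ln, Hs. }
  unfold Defs.tanh. rewrite exp_Ropp. pose proof (exp_pos (artanh y)).
  replace ((exp (artanh y) - / exp (artanh y)) / (exp (artanh y) + / exp (artanh y)))
    with ((exp (artanh y) * exp (artanh y) - 1) / (exp (artanh y) * exp (artanh y) + 1))
    by (field; nra).
  rewrite E. unfold s. field. lra.
Qed.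

Lemma gv_opp w v x : gv w v (- x) = - gv w (- v) x.
Proof.
  unfold gv. replace (w * - x + v) with (- (w * x + - v)) by ring.
  rewrite tanh_opp. ring.
Qed.

Lemma loc_min_gv_opp w v p : loc_min (gv w v) p <-> loc_max (gv w (- v)) (- p).
Proof.
  assert (Hg : forall y, gv w v y = - gv w (- v) (- y)).
  { intros y. rewrite gv_opp, !Ropp_involutive. reflexivity. }
  split; intros [eps [Heps Hm]]; exists eps; split; auto; intros y Hy.
  - specialize (Hm (- y)). rewrite !Hg, Ropp_involutive in Hm.
    replace (- y - p) with (- (y - - p)) in Hm by ring. rewrite Rabs_Ropp in Hm.
    specialize (Hm Hy). lra.
  - specialize (Hm (- y)). rewrite !Hg.
    replace (- y - - p) with (- (y - p)) in Hm by ring. rewrite Rabs_Ropp in Hm.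
    specialize (Hm Hy). lra.
Qed.

Lemma not_loc_max f p :
  (forall eps, 0 < eps -> exists y, Rabs (y - p) < eps /\ f p < f y) -> ~ loc_max f p.
Proof.
  intros Hup [eps [Heps Hm]]. destruct (Hup eps Heps) as [y [Hy Hlt]].
  specialize (Hm y Hy). lra.
Qed.

Lemma epsilon_unique {A : Type} (P : A -> Prop) (a0 : A) (q : A) :
  P q -> (forall p, P p -> p = q) -> epsilon (inhabits a0) P = q.
Proof. intros Hq Hu. apply Hu, epsilon_spec. eauto. Qed.

Section Pivots.
Variable w : R.
Hypothesis Hw : 1 < w.

Let tau := critical_level w.
(* [tanh (w x + v) = +- tau] exactly when [w x + v = +- crit]. *)
Let crit := artanh tau.

Lemma tanh_crit : tanh crit = tau.
Proof. pose proof (critical_level_spec w Hw). apply tanh_artanh. unfold tau. lra. Qed.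

Lemma crit_pos : 0 < crit.
Proof.
  pose proof (critical_level_spec w Hw) as [Htau _].
  destruct (Rle_lt_dec crit 0) as [Hc | Hc]; auto.
  pose proof (tanh_le _ _ Hc) as H. rewrite tanh_crit in H.
  unfold Defs.tanh in H. rewrite Ropp_0, exp_0 in H. unfold tau in *. lra.
Qed.

Lemma gv_slope_pos z : z < - crit \/ crit < z -> 0 < 1 - w * (1 - tanh z ^ 2).
Proof.
  intros Hz. pose proof (critical_level_spec w Hw) as [Htau Htau2]. fold tau in Htau, Htau2.
  assert (tau ^ 2 < tanh z ^ 2).
  { destruct Hz as [Hz | Hz]; pose proof (tanh_lt _ _ Hz);
      rewrite ?tanh_opp, tanh_crit in *; nra. }
  assert (w * (1 - tau ^ 2) = 1) by (rewrite Htau2; field; lra). nra.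
Qed.

Lemma gv_slope_neg z : - crit < z < crit -> 1 - w * (1 - tanh z ^ 2) < 0.
Proof.
  intros [H1 H2]. pose proof (critical_level_spec w Hw) as [Htau Htau2]. fold tau in Htau, Htau2.
  pose proof (tanh_lt _ _ H1). pose proof (tanh_lt _ _ H2).
  rewrite tanh_opp, tanh_crit in *.
  assert (tanh z ^ 2 < tau ^ 2) by nra.
  assert (w * (1 - tau ^ 2) = 1) by (rewrite Htau2; field; lra). nra.
Qed.

Lemma MVT_gv v a c : a < c ->
  exists xi, a < xi < c /\ gv w v c - gv w v a = (1 - w * (1 - tanh (w * xi + v) ^ 2)) * (c - a).
Proof.
  intros Hac. destruct (MVT_tanh (w * a + v) (w * c + v)) as [xi [Hxi E]]; [nra |].
  exists ((xi - v) / w). split.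
  - split; apply (Rmult_lt_reg_l w); try lra; field_simplify; lra.
  - unfold gv. replace (w * ((xi - v) / w) + v) with xi by (field; lra).
    transitivity ((c - a) - (tanh (w * c + v) - tanh (w * a + v))); [ring | rewrite E; ring].
Qed.

Lemma gv_increasing_left v a c : a < c -> w * c + v <= - crit -> gv w v a < gv w v c.
Proof.
  intros Hac Hc. destruct (MVT_gv v a c Hac) as [xi [Hxi E]].
  assert (0 < 1 - w * (1 - tanh (w * xi + v) ^ 2)) by (apply gv_slope_pos; left; nra).
  nra.
Qed.

Lemma gv_decreasing_mid v a c : a < c -> - crit <= w * a + v -> w * c + v <= crit ->
  gv w v c < gv w v a.
Proof.
  intros Hac Ha Hc. destruct (MVT_gv v a c Hac) as [xi [Hxi E]].
  assert (1 - w * (1 - tanh (w * xi + v) ^ 2) < 0) by (apply gv_slope_neg; split; nra).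
  nra.
Qed.

Lemma gv_increasing_right v a c : a < c -> crit <= w * a + v -> gv w v a < gv w v c.
Proof.
  intros Hac Ha. destruct (MVT_gv v a c Hac) as [xi [Hxi E]].
  assert (0 < 1 - w * (1 - tanh (w * xi + v) ^ 2)) by (apply gv_slope_pos; right; nra).
  nra.
Qed.

Lemma loc_max_gv v : loc_max (gv w v) ((- crit - v) / w).
Proof.
  pose proof crit_pos. set (q := (- crit - v) / w).
  assert (Hq : w * q + v = - crit) by (unfold q; field; lra).
  exists (2 * crit / w). split; [apply Rdiv_lt_0_compat; lra |].
  intros y Hy. apply Rabs_def2 in Hy.
  assert (Hwe : w * (2 * crit / w) = 2 * crit) by (field; lra).
  destruct (Rtotal_order y q) as [Hyq | [-> | Hyq]].
  - left. apply gv_increasing_left; lra.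
  - lra.
  - left. apply gv_decreasing_mid; nra.
Qed.

Lemma loc_max_gv_unique v p : loc_max (gv w v) p -> p = (- crit - v) / w.
Proof.
  intros Hmax. pose proof crit_pos. set (z := w * p + v).
  destruct (Rtotal_order z (- crit)) as [Hz | [Hz | Hz]].
  - exfalso. revert Hmax. apply not_loc_max. intros eps Heps.
    set (d := Rmin eps ((- crit - z) / w) / 2).
    assert (Hd : 0 < Rmin eps ((- crit - z) / w))
      by (apply Rmin_glb_lt; [lra | apply Rdiv_lt_0_compat; lra]).
    pose proof (Rmin_l eps ((- crit - z) / w)). pose proof (Rmin_r eps ((- crit - z) / w)).
    assert (w * ((- crit - z) / w) = - crit - z) by (field; lra).
    exists (p + d). split; [rewrite Rabs_right; unfold d; lra |].
    apply gv_increasing_left; unfold d, z in *; nra.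
  - unfold z in Hz. rewrite <- Hz. field. lra.
  - exfalso. revert Hmax. apply not_loc_max. intros eps Heps.
    destruct (Rle_lt_dec z crit) as [Hz' | Hz'].
    + set (d := Rmin eps ((z + crit) / w) / 2).
      assert (Hd : 0 < Rmin eps ((z + crit) / w))
        by (apply Rmin_glb_lt; [lra | apply Rdiv_lt_0_compat; lra]).
      pose proof (Rmin_l eps ((z + crit) / w)). pose proof (Rmin_r eps ((z + crit) / w)).
      assert (w * ((z + crit) / w) = z + crit) by (field; lra).
      exists (p - d). split; [rewrite Rabs_left; unfold d; lra |].
      apply gv_decreasing_mid; unfold d, z in *; nra.
    + exists (p + eps / 2). split; [rewrite Rabs_right; lra |].
      apply gv_increasing_right; unfold z in *; lra.
Qed.

Lemma pm_v_eq v : pm_v w v = (- crit - v) / w.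
Proof. apply epsilon_unique; [apply loc_max_gv | apply loc_max_gv_unique]. Qed.

(* By the symmetry [gv w v (- x) = - gv w (- v) x], minima mirror maxima. *)
Lemma pp_v_eq v : pp_v w v = (crit - v) / w.
Proof.
  apply epsilon_unique.
  - apply loc_min_gv_opp. replace (- ((crit - v) / w)) with ((- crit - - v) / w)
      by (field; lra). apply loc_max_gv.
  - intros p Hp. apply loc_min_gv_opp, loc_max_gv_unique in Hp.
    apply (f_equal Ropp) in Hp. rewrite Ropp_involutive in Hp. rewrite Hp. field. lra.
Qed.

Lemma pivot_minus_eq : pivot_minus w = - critical_level w.
Proof.
  assert (Hgv : forall v, gv w v (pm_v w v) = (- crit - v) / w + tau).
  { intros v. rewrite pm_v_eq. unfold gv.
    replace (w * ((- crit - v) / w) + v) with (- crit) by (field; lra).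
    rewrite tanh_opp, tanh_crit. ring. }
  assert (H : gv w (v_minus w) (pm_v w (v_minus w)) = 0).
  { unfold v_minus. apply epsilon_spec. exists (w * tau - crit). rewrite Hgv. field. lra. }
  unfold pivot_minus. rewrite Hgv in H. rewrite pm_v_eq. fold tau. lra.
Qed.

Lemma pivot_plus_eq : pivot_plus w = critical_level w.
Proof.
  assert (Hgv : forall v, gv w v (pp_v w v) = (crit - v) / w - tau).
  { intros v. rewrite pp_v_eq. unfold gv.
    replace (w * ((crit - v) / w) + v) with crit by (field; lra).
    rewrite tanh_crit. ring. }
  assert (H : gv w (v_plus w) (pp_v w (v_plus w)) = 0).
  { unfold v_plus. apply epsilon_spec. exists (crit - w * tau). rewrite Hgv. field. lra. }
  unfold pivot_plus. rewrite Hgv in H. rewrite pp_v_eq. fold tau. lra.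
Qed.

End Pivots.

Lemma fixed_point_eq_of_kappa w b x y (kap : R -> nat) : 0 < w ->
  is_fixed_point w b x -> is_fixed_point w b y ->
  (1 < w -> forall z, kap z = kappa_pivot w z) -> kap x = kap y -> x = y.
Proof.
  intros Hw Fx Fy Hk Hxy. destruct (Rle_lt_dec w 1) as [Hw1 | Hw1].
  { exact (fixed_point_unique_of_le1 w b x y ltac:(lra) Fx Fy). }
  rewrite !(Hk Hw1) in Hxy. unfold kappa_pivot in Hxy.
  rewrite pivot_minus_eq, pivot_plus_eq in Hxy by exact Hw1.
  pose proof (proj1 (critical_level_spec w Hw1)) as Htau.
  destruct (Rtotal_order x y) as [Hlt | [Heq | Hlt]]; auto; exfalso.
  - pose proof (fixed_points_straddle_critical w b x y Hw1 Fx Fy Hlt).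
    repeat destruct Rle_dec in Hxy; repeat destruct Rlt_dec in Hxy; try discriminate; lra.
  - pose proof (fixed_points_straddle_critical w b y x Hw1 Fy Fx Hlt).
    repeat destruct Rle_dec in Hxy; repeat destruct Rlt_dec in Hxy; try discriminate; lra.
Qed.

(** * The cascade *)

Definition is_lim_list (vs : nat -> list R) (v : list R) : Prop :=
  (forall t, length (vs t) = length v) /\
  (forall k, is_lim_seq (fun t => nth k (vs t) 0) (nth k v 0)).

Lemma is_lim_list_app u vs v : is_lim_list vs v -> is_lim_list (fun t => u ++ vs t) (u ++ v).
Proof.
  intros [Hl Hn]. split.
  - intros t. rewrite !length_app, Hl. reflexivity.
  - intros k. destruct (Nat.lt_ge_cases k (length u)).
    + rewrite app_nth1 by auto. apply (is_lim_seq_ext (fun _ => nth k u 0)).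
      * intros; rewrite app_nth1; auto.
      * apply is_lim_seq_const.
    + rewrite app_nth2 by auto. apply (is_lim_seq_ext (fun t => nth (k - length u) (vs t) 0)).
      * intros; rewrite app_nth2; auto.
      * apply Hn.
Qed.

Lemma is_lim_seq_dot c vs v : is_lim_list vs v -> is_lim_seq (fun t => dot c (vs t)) (dot c v).
Proof.
  revert vs v. induction c as [| a c IH]; intros vs v [Hl Hn].
  { apply is_lim_seq_const. }
  destruct v as [| h v].
  - apply (is_lim_seq_ext (fun _ => 0)); [| apply is_lim_seq_const].
    intros t. specialize (Hl t). now destruct (vs t).
  - apply (is_lim_seq_ext (fun t => a * nth 0 (vs t) 0 + dot c (tl (vs t)))).
    { intros t. specialize (Hl t). destruct (vs t); simpl in *; [discriminate | reflexivity]. }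
    apply is_lim_seq_plus'; [apply (is_lim_seq_scal_l _ a h (Hn O)) |].
    apply IH. split.
    + intros t. specialize (Hl t). destruct (vs t); simpl in *; lia.
    + intros k. apply (is_lim_seq_ext (fun t => nth (S k) (vs t) 0)); [| apply (Hn (S k))].
      intros t. destruct (vs t); simpl; [now destruct k | reflexivity].
Qed.

Lemma is_lim_list_eval_layer (l : layer) vs v : (forall x, continuity_pt (snd l) x) ->
  is_lim_list vs v -> is_lim_list (fun t => eval_layer l (vs t)) (eval_layer l v).
Proof.
  destruct l as [[W b] sigma]. simpl. intros Hs Hlim. split.
  { intros t. unfold eval_layer. rewrite !length_map. reflexivity. }
  intros k. unfold eval_layer. set (d := (@nil R, 0)).
  destruct (Nat.lt_ge_cases k (length (combine W b))) as [Hk | Hk].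
  - rewrite (nth_indep _ 0 (sigma (dot (fst d) v + snd d))) by (rewrite length_map; auto).
    rewrite (map_nth (fun rb : list R * R => sigma (dot (fst rb) v + snd rb))).
    apply (is_lim_seq_ext
      (fun t => sigma (dot (fst (nth k (combine W b) d)) (vs t) + snd (nth k (combine W b) d)))).
    { intros t. rewrite (nth_indep _ 0 (sigma (dot (fst d) (vs t) + snd d)))
        by (rewrite length_map; auto).
      now rewrite (map_nth (fun rb : list R * R => sigma (dot (fst rb) (vs t) + snd rb))). }
    apply is_lim_seq_continuous; [apply Hs |].
    apply is_lim_seq_plus'; [now apply is_lim_seq_dot | apply is_lim_seq_const].
  - rewrite nth_overflow by (rewrite length_map; auto).
    apply (is_lim_seq_ext (fun _ => 0)); [| apply is_lim_seq_const].
    intros t. rewrite nth_overflow by (rewrite length_map; auto). reflexivity.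
Qed.

Lemma is_lim_seq_ffn g vs v : is_ffn g -> is_lim_list vs v -> is_lim_seq (fun t => g (vs t)) (g v).
Proof.
  intros [ls [c [c0 [Hc He]]]] Hlim.
  apply (is_lim_seq_ext (fun t => eval_ffn ls c c0 (vs t))); [intros; now rewrite He |].
  rewrite He. unfold eval_ffn. clear He.
  apply is_lim_seq_plus'; [apply is_lim_seq_dot | apply is_lim_seq_const].
  revert vs v Hlim. induction Hc as [| l ls Hl Hls IH]; intros vs v Hlim; [exact Hlim |].
  apply IH. now apply is_lim_list_eval_layer.
Qed.

Lemma nth_map_seq {A : Type} (f : nat -> A) n j d : (j < n)%nat -> nth j (map f (seq 0 n)) d = f j.
Proof.
  intros H. rewrite (nth_indep _ d (f 0%nat)) by (rewrite length_map, length_seq; auto).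
  rewrite map_nth, seq_nth by auto. reflexivity.
Qed.

Section Cascade.
Variables (w : nat -> R) (beta : nat -> list R -> R) (ue : list R).

Let step (s : list R) : list R := fbar w beta s ue.

Lemma fbar_length x u : length (fbar w beta x u) = length x.
Proof. unfold fbar. now rewrite length_map, length_seq. Qed.

Lemma nth_fbar x u j : (j < length x)%nat ->
  nth j (fbar w beta x u) 0 = tanh (w j * nth j x 0 + beta j (u ++ firstn j x)).
Proof. intros H. unfold fbar. now rewrite nth_map_seq. Qed.

Lemma firstn_fbar k x u : firstn k (fbar w beta x u) = fbar w beta (firstn k x) u.
Proof.
  apply nth_ext with (d := 0) (d' := 0).
  { now rewrite length_firstn, !fbar_length, length_firstn. }
  intros j Hj. rewrite length_firstn, fbar_length in Hj.
  assert (Hjk : (j <? k)%nat = true) by (apply Nat.ltb_lt; lia).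
  rewrite nth_firstn, Hjk, !nth_fbar by (try rewrite length_firstn; lia).
  rewrite (nth_firstn k x j), Hjk, firstn_firstn. now replace (Nat.min j k) with j by lia.
Qed.

Lemma iter_step_length t x : length (Nat.iter t step x) = length x.
Proof. induction t; simpl; auto. unfold step at 1. now rewrite fbar_length. Qed.

Lemma firstn_iter_step t k x : firstn k (Nat.iter t step x) = Nat.iter t step (firstn k x).
Proof. induction t; simpl; auto. unfold step at 1 3. now rewrite firstn_fbar, IHt. Qed.

(* The sequence [x_{j,t}] whose limit is [S*_j]; earlier neurons are unaffected by
   truncating [x] after neuron [j]. *)
Definition neuron_orbit (j : nat) (x : list R) (t : nat) : R :=
  nth j (Nat.iter t step (firstn (S j) x)) 0.

Lemma neuron_orbit_S j x t : (j < length x)%nat ->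
  neuron_orbit j x (S t) =
  tanh (w j * neuron_orbit j x t + beta j (ue ++ Nat.iter t step (firstn j x))).
Proof.
  intros H. unfold neuron_orbit. rewrite Nat.iter_succ. unfold step at 1. rewrite nth_fbar.
  - rewrite firstn_iter_step, firstn_firstn. now replace (Nat.min j (S j)) with j by lia.
  - rewrite iter_step_length, length_firstn. lia.
Qed.

Lemma nth_iter_step k j x t : (k < j)%nat -> nth k (Nat.iter t step (firstn j x)) 0 = neuron_orbit k x t.
Proof.
  intros H. unfold neuron_orbit.
  assert (Hk : (k <? S k)%nat = true) by (apply Nat.ltb_lt; lia).
  replace (firstn (S k) x) with (firstn (S k) (firstn j x))
    by (rewrite firstn_firstn; f_equal; lia).
  now rewrite <- (firstn_iter_step t (S k) (firstn j x)), nth_firstn, Hk.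
Qed.

Lemma Sstar_fixed_point x :
  (forall j, (j < length x)%nat -> 0 < w j) ->
  (forall j, (j < length x)%nat -> is_ffn (beta j)) ->
  forall j, (j < length x)%nat ->
  is_lim_seq (neuron_orbit j x) (Sstar w beta ue j x) /\
  is_fixed_point (w j) (beta j (ue ++ map (fun k => Sstar w beta ue k x) (seq 0 j)))
    (Sstar w beta ue j x).
Proof.
  intros Hw Hb j. induction j as [j IH] using lt_wf_ind. intros Hj.
  assert (Hprefix : is_lim_list (fun t => Nat.iter t step (firstn j x))
                                (map (fun k => Sstar w beta ue k x) (seq 0 j))).
  { split.
    - intros t. rewrite iter_step_length, length_firstn, length_map, length_seq. lia.
    - intros k. destruct (Nat.lt_ge_cases k j) as [Hk | Hk].
      + rewrite nth_map_seq by exact Hk. apply (is_lim_seq_ext (neuron_orbit k x)).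
        * intros t. now rewrite nth_iter_step.
        * apply (IH k Hk). lia.
      + rewrite nth_overflow by (rewrite length_map, length_seq; lia).
        apply (is_lim_seq_ext (fun _ => 0)); [| apply is_lim_seq_const].
        intros t. rewrite nth_overflow; [reflexivity |].
        rewrite iter_step_length, length_firstn. lia. }
  destruct (orbit_converges (w j) _ _ (neuron_orbit j x) (Hw j Hj)
    (is_lim_seq_ffn _ _ _ (Hb j Hj) (is_lim_list_app ue _ _ Hprefix))
    (fun t => neuron_orbit_S j x t Hj)) as [L [HL HF]].
  assert (E : Sstar w beta ue j x = L).
  { change (real (Lim_seq (neuron_orbit j x)) = L). now rewrite (is_lim_seq_unique _ _ HL). }
  rewrite E. split; [exact HL | exact HF].
Qed.

(* Neuron by neuron: equal limits of the earlier neurons give the same bias, and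
   then equal [kappa] pins down the fixed point. *)
Lemma Sstar_eq_of_etabar_eq (n : nat) (kappa : nat -> R -> nat) x y :
  (forall j, (j < n)%nat -> 0 < w j) -> (forall j, (j < n)%nat -> is_ffn (beta j)) ->
  (forall j z, (j < n)%nat -> 1 < w j -> kappa j z = kappa_pivot (w j) z) ->
  length x = length y -> (length x <= n)%nat ->
  etabar w beta ue kappa x = etabar w beta ue kappa y ->
  forall j, (j < length x)%nat -> Sstar w beta ue j x = Sstar w beta ue j y.
Proof.
  intros Hw Hb Hk Hlen Hn Het j. induction j as [j IH] using lt_wf_ind. intros Hj.
  destruct (Sstar_fixed_point x (fun j _ => Hw j ltac:(lia)) (fun j _ => Hb j ltac:(lia)) j Hj)
    as [_ Fx].
  destruct (Sstar_fixed_point y (fun j _ => Hw j ltac:(lia)) (fun j _ => Hb j ltac:(lia)) j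
    ltac:(lia)) as [_ Fy].
  assert (Ebias : map (fun k => Sstar w beta ue k x) (seq 0 j) =
                  map (fun k => Sstar w beta ue k y) (seq 0 j)).
  { apply map_ext_in. intros k Hk0. apply in_seq in Hk0. apply IH; lia. }
  rewrite Ebias in Fx.
  apply (fixed_point_eq_of_kappa (w j) _ _ _ (kappa j) (Hw j ltac:(lia)) Fx Fy).
  - intros H z. apply Hk; [lia | exact H].
  - apply (f_equal (fun l => nth j l 0%nat)) in Het. unfold etabar in Het.
    rewrite !nth_map_seq in Het by lia. exact Het.
Qed.

End Cascade.

(** * Equivalence classes *)

Lemma lex_le_min_exists i : forall Q : list nat -> Prop,
  (forall s, Q s -> length s = i) -> (exists s, Q s) ->
  exists s, Q s /\ forall s', Q s' -> lex_le s s'.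
Proof.
  induction i as [| i IH]; intros Q Hlen [s0 Hs0].
  { exists s0. split; [exact Hs0 |]. intros s' _.
    specialize (Hlen s0 Hs0). now destruct s0. }
  destruct s0 as [| h0 t0]; [discriminate (Hlen _ Hs0) |].
  destruct (dec_inh_nat_subset_has_unique_least_element (fun h => exists tl, Q (h :: tl)))
    as [m [[[tl Hm] Hmin] _]].
  { intros h. apply classic. }
  { eauto. }
  destruct (IH (fun tl => Q (m :: tl))) as [tmin [Ht Htmin]].
  { intros s Hs. specialize (Hlen _ Hs). simpl in Hlen. lia. }
  { eauto. }
  exists (m :: tmin). split; [exact Ht |]. intros [| h' t'] Hs'; [discriminate (Hlen _ Hs') |].
  simpl. assert (m <= h')%nat by (apply Hmin; eauto).
  destruct (Nat.eq_dec m h') as [<- | Hne]; [right; auto | left; lia].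
Qed.

Lemma eqclos_dom D r x y : eqclos D r x y -> D x /\ D y.
Proof. induction 1; intuition. Qed.

Lemma sim_Xpre w beta ue X' U {Sigma : Type} (lam : list R -> Sigma) i x y :
  (forall z u, X' z -> U u -> X' (fbar w beta z u)) ->
  sim w beta ue X' U lam i x y -> Xpre X' i x /\ Xpre X' i y.
Proof.
  intros Hinv. induction 1 as [x y Hxy | | | | x y u v _ [[zx [Hzx ->]] [zy [Hzy ->]]] Hu Hv _];
    try tauto.
  - exact (eqclos_dom _ _ _ _ Hxy).
  - split; [exists (fbar w beta zx u) | exists (fbar w beta zy v)];
      rewrite firstn_fbar; auto.
Qed.

Lemma Xpre_length X' n i a : (forall z, X' z -> length z = n) -> (i <= n)%nat ->
  Xpre X' i a -> length a = i.
Proof. intros HX Hi [z [Hz ->]]. rewrite length_firstn, (HX z Hz). lia. Qed.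

Lemma rho_attained w beta ue X' U {Sigma : Type} (lam : list R -> Sigma) kappa i a :
  (forall z u, X' z -> U u -> X' (fbar w beta z u)) ->
  (forall b, Xpre X' i b -> length b = i) -> Xpre X' i a ->
  exists b, sim w beta ue X' U lam i a b /\
            etabar w beta ue kappa b = rho w beta ue X' U lam kappa i a.
Proof.
  intros Hinv Hlen Ha.
  set (Q := fun s => exists b, sim w beta ue X' U lam i a b /\ etabar w beta ue kappa b = s).
  destruct (lex_le_min_exists i Q) as [s [Hs Hsmin]].
  { intros s [b [Hb <-]]. unfold etabar. rewrite length_map, length_seq.
    apply Hlen, (sim_Xpre _ _ _ _ _ _ _ _ _ Hinv Hb). }
  { exists (etabar w beta ue kappa a), a. split; [now apply sim_refl | reflexivity]. }
  unfold rho. match goal with |- context [epsilon ?inh ?P] =>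
    assert (HP : P (epsilon inh P)) end.
  { apply epsilon_spec. exists s. split; [exact Hs |]. intros b Hb. apply Hsmin. now exists b. }
  exact (proj1 HP).
Qed.

Theorem proposition11
  (n m : nat) (w : nat -> R) (beta : nat -> list R -> R)
  (U : list R -> Prop) (X' : list R -> Prop)
  (Sigma : Type) (lam : list R -> Sigma) (ue : list R)
  (kappa : nat -> R -> nat)
  (Hw : forall j, (j < n)%nat -> 0 < w j)
  (Hbeta : forall j, (j < n)%nat -> is_ffn (beta j))
  (HU : forall u, U u -> length u = m)
  (HSigma : exists l : list Sigma, forall s, In s l)
  (HX' : forall x, X' x -> length x = n /\ List.Forall (fun r => -1 <= r <= 1) x)
  (Hinv : forall x u, X' x -> U u -> X' (fbar w beta x u))
  (Hue : U ue)
  (Hkappa : forall j x, (j < n)%nat -> (kappa j x = 1 \/ kappa j x = 2 \/ kappa j x = 3)%nat)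
  (Hkappa_piv : forall j x, (j < n)%nat -> 1 < w j -> kappa j x = kappa_pivot (w j) x) :
  forall i, (1 <= i <= n)%nat ->
  forall x y, Xpre X' i x -> Xpre X' i y ->
    rho w beta ue X' U lam kappa i x = rho w beta ue X' U lam kappa i y ->
    sim w beta ue X' U lam i x y.
Proof.
  intros i Hi x y Hx Hy Hrho.
  assert (Hlen : forall a, Xpre X' i a -> length a = i).
  { intros a. apply (Xpre_length X' n); [intros z Hz; apply (HX' z Hz) | lia]. }
  destruct (rho_attained w beta ue X' U lam kappa i x Hinv Hlen Hx) as [x' [Hxx' Ex]].
  destruct (rho_attained w beta ue X' U lam kappa i y Hinv Hlen Hy) as [y' [Hyy' Ey]].
  destruct (sim_Xpre _ _ _ _ _ _ _ _ _ Hinv Hxx') as [_ Hx'].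
  destruct (sim_Xpre _ _ _ _ _ _ _ _ _ Hinv Hyy') as [_ Hy'].
  assert (HS : Sbar w beta ue x' = Sbar w beta ue y').
  { unfold Sbar. rewrite (Hlen x' Hx'), (Hlen y' Hy').
    apply map_ext_in. intros j Hj. apply in_seq in Hj.
    apply (Sstar_eq_of_etabar_eq w beta ue n kappa); auto; try congruence;
      rewrite (Hlen x' Hx'); try rewrite (Hlen y' Hy'); lia. }
  apply sim_trans with x'; [exact Hxx' |].
  apply sim_trans with y'; [| now apply sim_sym].
  apply sim_base, eqc_base; assumption.
Qed.
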